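(* Let $m_1 > m_2 \ge 2$ be integers and let $G_j$ be a first kind of ideal center graph (defined in the context) with center vertex $v_j$, consisting of a clique $K$ of size $m_1$ and a clique $K'$ of size $m_2$ with $K \cap K' = \{v_j\}$ and no edges between $K\setminus\{v_j\}$ and $K'\setminus\{v_j\}$, so that $K$ is the (unique) maximum clique of $G_j$. Let $A$ be the adjacency matrix of $G_j$, $\lambda_1$ its largest eigenvalue with eigenvector $|\lambda_1\rangle$, and for a vertex $v_l$ let $p_{l,1} = \langle l|\lambda_1\rangle\langle\lambda_1|j\rangle$. If $v_l$ is a member of the maximum clique $K$ and $v_k$ is not a member of the maximum clique, then \[ p_{l,1} > p_{k,1}, \] i.e. (for $v_l \neq v_j$) $\left|\frac{1}{m_1-2-\lambda_1}\right| > \left|\frac{1}{m_2-2-\lambda_1}\right|$.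
   Context: A graph $G_j$ is a center graph with center vertex $v_j$ if $v_j$ is adjacent to all other vertices. A first kind of ideal center graph is a center graph $G_j$ whose vertex set is the union of two cliques, both containing the center vertex $v_j$, such that no edge joins a vertex of one clique (other than $v_j$) to a vertex of the other clique; $m_1$ denotes the size of the larger (maximum) clique and $m_2$ the size of the other clique. The continuous time quantum walk on a graph with adjacency matrix $A$ (vertices $v_1,\dots,v_N$ identified with an orthonormal basis $|1\rangle,\dots,|N\rangle$) has transition amplitude $\alpha_{l,j}(t) = \langle l|e^{iAt}|j\rangle = \sum_n e^{i\lambda_n t}\langle l|\lambda_n\rangle\langle\lambda_n|j\rangle$, where $\lambda_1\ge\lambda_2\ge\dots\ge\lambda_N$ are the eigenvalues of $A$ with orthonormal eigenvectors $|\lambda_n\rangle$; $p_{l,n} = \langle l|\lambda_n\rangle\langle\lambda_n|j\rangle$ is the intensity (coefficient) of the frequency $\lambda_n$ in $\alpha_{l,j}$. *)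

From HB Require Import structures.
From mathcomp Require Import all_boot all_order all_algebra.
Set Implicit Arguments. Unset Strict Implicit. Unset Printing Implicit Defensive.
Import Order.TTheory GRing.Theory Num.Theory.
Local Open Scope ring_scope.

Definition adjmx (R : nzRingType) (N : nat) (e : rel 'I_N) : 'M[R]_N :=
  \matrix_(i, k) (e i k)%:R.

Definition simple_graph (N : nat) (e : rel 'I_N) : Prop :=
  symmetric e /\ irreflexive e.

Definition center_graph (N : nat) (e : rel 'I_N) (j : 'I_N) : Prop :=
  simple_graph e /\ (forall x, x != j -> e j x).

Definition is_clique (N : nat) (e : rel 'I_N) (C : {set 'I_N}) : Prop :=
  {in C &, forall x y, x != y -> e x y}.

Definition first_kind_ideal_center_graph (N : nat) (e : rel 'I_N) (j : 'I_N)
    (K K' : {set 'I_N}) : Prop :=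
  [/\ center_graph e j,
      K :|: K' = [set: 'I_N] /\ K :&: K' = [set j],
      is_clique e K, is_clique e K'
    & forall x y, x \in K :\ j -> y \in K' :\ j -> ~~ e x y].

Definition largest_eigenvalue (R : rcfType) (N : nat) (A : 'M[R]_N)
    (lam : R) : Prop :=
  eigenvalue A lam /\ (forall a, eigenvalue A a -> a <= lam).

Definition unit_eigenvector (R : rcfType) (N : nat) (A : 'M[R]_N)
    (lam : R) (u : 'rV[R]_N) : Prop :=
  u *m A = lam *: u /\ \sum_(i < N) u 0 i ^+ 2 = 1.

Definition intensity (R : rcfType) (N : nat) (u : 'rV[R]_N) (l j : 'I_N) : R :=
  u 0 l * u 0 j.

From HB Require Import structures.
From mathcomp Require Import all_boot all_order all_algebra.
From mathcomp Require Import ring lra.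
Set Implicit Arguments. Unset Strict Implicit. Unset Printing Implicit Defensive.
Import Order.TTheory GRing.Theory Num.Theory.
Local Open Scope ring_scope.

(* Let n1 = m1 - 1 and n2 = m2 - 1 count the non-central vertices of K and K'.
   Every vertex of K \ {j} has closed neighbourhood K, so an eigenvector u for
   an eigenvalue lam <> -1 is constant on K \ {j}, and likewise on K' \ {j},
   with values u_j / (lam + 1 - n1) and u_j / (lam + 1 - n2).  On such
   block-constant vectors A acts by a 3 x 3 quotient matrix whose
   characteristic cubic has a root above n1 - 1, so lam1 > n1 - 1.  Hence
   0 < lam1 + 1 - n1 < lam1 + 1 - n2 and 1 < lam1 + 1 - n2; as u_j <> 0, the
   intensity u_l u_j (u_j^2 or u_j^2 / (lam1 + 1 - n1)) exceeds
   u_k u_j = u_j^2 / (lam1 + 1 - n2). *)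

Lemma mulmx_adjmx (R : nzRingType) (N : nat) (e : rel 'I_N) (w : 'rV[R]_N) x :
  (w *m adjmx R e) 0 x = \sum_(y | e y x) w 0 y.
Proof.
rewrite mxE [RHS]big_mkcond; apply: eq_bigr => y _.
by rewrite mxE; case: (e y x); rewrite ?mulr1 ?mulr0.
Qed.

Lemma first_kind_ideal_center_graph_sym (N : nat) (e : rel 'I_N) j K K' :
  first_kind_ideal_center_graph e j K K' -> first_kind_ideal_center_graph e j K' K.
Proof.
case=> cg [covK capK] cliqK cliqK' noedge; split=> //; first by rewrite setUC setIC.
by move=> x y xK' yK; rewrite cg.1.1; apply: noedge.
Qed.

Lemma cubic_root_gt (R : rcfType) (n1 n2 : R) : 0 <= n2 -> n2 < n1 ->
  exists2 z, n1 - 1 < z &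
    z * (z - n1 + 1) * (z - n2 + 1) = n1 * (z - n2 + 1) + n2 * (z - n1 + 1).
Proof.
move=> n2_ge0 n2_lt_n1.
pose p : {poly R} := 'X * ('X - (n1 - 1)%:P) * ('X - (n2 - 1)%:P)
  - n1%:P * ('X - (n2 - 1)%:P) - n2%:P * ('X - (n1 - 1)%:P).
have pE z : p.[z] =
    z * (z - n1 + 1) * (z - n2 + 1) - n1 * (z - n2 + 1) - n2 * (z - n1 + 1).
  by rewrite !hornerE; ring.
have p_lt0 : p.[n1 - 1] < 0 by rewrite pE; nra.
have [z /andP[z_ge _] /rootP pz0] : exists2 z, n1 - 1 <= z <= n1 + n2 & root p z.
  by apply: poly_ivt; rewrite ?(ltW p_lt0) ?pE /=; nra.
exists z.
  by rewrite lt_def z_ge andbT; apply: contraTneq p_lt0 => <-; rewrite pz0 ltxx.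
by apply/eqP; rewrite -subr_eq0 -pz0 pE; apply/eqP; ring.
Qed.

Section Leaves.
Variables (N : nat) (e : rel 'I_N) (j : 'I_N) (K K' : {set 'I_N}).
Hypothesis graphH : first_kind_ideal_center_graph e j K K'.

Lemma center_in_K : j \in K.
Proof.
by case: graphH => _ [_ capK] _ _ _; have := set11 j; rewrite -capK in_setI => /andP[].
Qed.

Lemma notin_K y : (y \notin K) = (y \in K' :\ j).
Proof.
case: graphH => _ [covK capK] _ _ _.
have yKK' : (y \in K) || (y \in K') by rewrite -in_setU covK inE.
have yj : (y == j) = (y \in K) && (y \in K') by rewrite -in_setI capK inE.
by rewrite !inE yj; move: yKK'; case: (y \in K); case: (y \in K').
Qed.

Lemma edge_center y : e y j = (y != j).
Proof.
case: graphH => [[[esym eirr] center] _ _ _ _].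
have [->|yj] := eqVneq y j; first by rewrite eirr.
by rewrite esym center.
Qed.

Lemma edge_K x y : x \in K :\ j -> e y x = (y \in K :\ x).
Proof.
case: graphH => [[[esym eirr] _] _ cliqK _ noedge] xKj.
have /setD1P[_ xK] := xKj.
have [yK|yK] := boolP (y \in K).
  rewrite !inE yK andbT; have [->|yx] := eqVneq y x; first by rewrite eirr.
  by rewrite cliqK.
rewrite !inE (negbTE yK) andbF esym; apply/negbTE/noedge => //.
by rewrite -notin_K.
Qed.

Lemma mulmx_adj_center (R : nzRingType) (w : 'rV[R]_N) :
  (w *m adjmx R e) 0 j = \sum_(y in K :\ j) w 0 y + \sum_(y in K' :\ j) w 0 y.
Proof.
rewrite mulmx_adjmx (eq_bigl _ _ edge_center) (bigID (mem K)) /=.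
congr (_ + _); apply: eq_bigl => y; first by rewrite !inE.
by rewrite notin_K; apply/andb_idl => /setD1P[].
Qed.

Lemma mulmx_adj_leaf (R : nzRingType) (w : 'rV[R]_N) x : x \in K :\ j ->
  (w *m adjmx R e) 0 x = w 0 j + \sum_(y in K :\ j) w 0 y - w 0 x.
Proof.
move=> xKj; have /setD1P[_ xK] := xKj.
rewrite mulmx_adjmx (eq_bigl _ _ (fun y => edge_K y xKj)).
have sumK : \sum_(y in K) w 0 y = w 0 x + \sum_(y in K :\ x) w 0 y.
  exact: big_setD1.
by rewrite (big_setD1 j center_in_K) /= in sumK; rewrite sumK addrAC subrr add0r.
Qed.

Lemma eigenvector_leaf (R : idomainType) (u : 'rV[R]_N) lam x :
  u *m adjmx R e = lam *: u -> lam + 1 != 0 -> x \in K :\ j ->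
  u 0 x * (lam + 1 - #|K :\ j|%:R) = u 0 j.
Proof.
move=> eig lam1_neq0 xKj.
set S := \sum_(y in K :\ j) u 0 y.
have leafE y : y \in K :\ j -> u 0 y * (lam + 1) = u 0 j + S.
  move=> yKj; have := congr1 (fun v : 'rV_N => v 0 y) eig.
  by rewrite /= mulmx_adj_leaf // mxE mulrDr mulr1 [_ * lam]mulrC => <-; rewrite subrK.
have S_eq : S = u 0 x * #|K :\ j|%:R.
  rewrite mulr_natr -sumr_const; apply: eq_bigr => y yKj.
  by apply: (mulIf lam1_neq0); rewrite !leafE.
by rewrite mulrBr -S_eq leafE // addrK.
Qed.

End Leaves.

Section BlockConstant.
Variables (N : nat) (e : rel 'I_N) (j : 'I_N) (K K' : {set 'I_N}).
Hypothesis graphH : first_kind_ideal_center_graph e j K K'.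
Let graphH' := first_kind_ideal_center_graph_sym graphH.
Local Notation n1 := #|K :\ j|%:R.
Local Notation n2 := #|K' :\ j|%:R.

Definition blockv (R : Type) (c a b : R) : 'rV[R]_N :=
  \row_i if i == j then c else if i \in K then a else b.

Lemma blockv_center (R : Type) (c a b : R) : blockv c a b 0 j = c.
Proof. by rewrite mxE eqxx. Qed.

Lemma blockv_K (R : Type) (c a b : R) x : x \in K :\ j -> blockv c a b 0 x = a.
Proof. by case/setD1P => /negbTE xj xK; rewrite mxE xj xK. Qed.

Lemma blockv_K' (R : Type) (c a b : R) x : x \in K' :\ j -> blockv c a b 0 x = b.
Proof.
move=> /[dup] /setD1P[/negbTE xj _]; rewrite -(notin_K graphH) => /negbTE xK.
by rewrite mxE xj xK.
Qed.

Lemma scale_blockv (R : nzRingType) (k c a b : R) :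
  k *: blockv c a b = blockv (k * c) (k * a) (k * b).
Proof. by apply/rowP => i; rewrite !mxE; case: ifP => // _; case: ifP. Qed.

Lemma sum_blockv_K (R : nzRingType) (c a b : R) :
  \sum_(y in K :\ j) blockv c a b 0 y = n1 * a.
Proof.
under eq_bigr => y yKj do rewrite blockv_K //.
by rewrite sumr_const mulr_natl.
Qed.

Lemma sum_blockv_K' (R : nzRingType) (c a b : R) :
  \sum_(y in K' :\ j) blockv c a b 0 y = n2 * b.
Proof.
under eq_bigr => y yKj do rewrite blockv_K' //.
by rewrite sumr_const mulr_natl.
Qed.

Lemma blockv_mulmx_adj (R : comNzRingType) (c a b : R) :
  blockv c a b *m adjmx R e =
  blockv (n1 * a + n2 * b) (c + (n1 - 1) * a) (c + (n2 - 1) * b).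
Proof.
apply/rowP => i; rewrite [RHS]mxE.
have [->|ij] := eqVneq i j.
  by rewrite (mulmx_adj_center graphH) sum_blockv_K sum_blockv_K'.
have [iK|iK] := boolP (i \in K).
  have iKj : i \in K :\ j by rewrite !inE ij.
  by rewrite (mulmx_adj_leaf graphH) // sum_blockv_K blockv_center blockv_K //; ring.
have iK'j : i \in K' :\ j by rewrite -(notin_K graphH).
by rewrite (mulmx_adj_leaf graphH') // sum_blockv_K' blockv_center blockv_K' //; ring.
Qed.

Lemma exists_eigenvalue_gt (R : rcfType) : (#|K' :\ j| < #|K :\ j|)%N ->
  exists2 z : R, n1 - 1 < z & eigenvalue (adjmx R e) z.
Proof.
rewrite -(ltr_nat R) => n2_lt_n1.
have [z z_gt zE] := cubic_root_gt (ler0n R _) n2_lt_n1.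
exists z => //; apply/eigenvalueP.
exists (blockv ((z - n1 + 1) * (z - n2 + 1)) (z - n2 + 1) (z - n1 + 1)).
  by rewrite blockv_mulmx_adj scale_blockv -zE; congr blockv; ring.
apply/eqP => /(congr1 (fun v : 'rV_N => v 0 j)); rewrite blockv_center mxE.
by apply/eqP; apply: mulf_neq0; apply: lt0r_neq0; lra.
Qed.

Lemma eigenvector_blockv (R : realFieldType) (u : 'rV[R]_N) lam :
  (#|K' :\ j| < #|K :\ j|)%N -> n1 - 1 < lam -> u *m adjmx R e = lam *: u ->
  u = blockv (u 0 j) (u 0 j / (lam + 1 - n1)) (u 0 j / (lam + 1 - n2)).
Proof.
rewrite -(ltr_nat R) => n2_lt_n1 lam_gt eig.
have d_neq0 n : n <= n1 -> lam + 1 - n != 0 by move=> ?; apply: lt0r_neq0; lra.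
have lam1_neq0 : lam + 1 != 0 by rewrite -[lam + 1]subr0 d_neq0.
apply/rowP => i; rewrite [RHS]mxE.
have [->|ij] := eqVneq i j; first by [].
have [iK|iK] := boolP (i \in K).
  apply: (canRL (mulfK (d_neq0 _ _))) => //.
  by rewrite (eigenvector_leaf graphH) // !inE ij.
apply: (canRL (mulfK (d_neq0 _ (ltW n2_lt_n1)))).
by rewrite (eigenvector_leaf graphH') // -(notin_K graphH).
Qed.

End BlockConstant.

Theorem theorem1 (R : rcfType) (N m1 m2 : nat) (e : rel 'I_N) (j : 'I_N)
    (K K' : {set 'I_N}) (lam1 : R) (u : 'rV[R]_N) :
  (m2 >= 2)%N -> (m1 > m2)%N ->
  first_kind_ideal_center_graph e j K K' ->
  #|K| = m1 -> #|K'| = m2 ->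
  largest_eigenvalue (adjmx R e) lam1 ->
  unit_eigenvector (adjmx R e) lam1 u ->
  forall l k : 'I_N, l \in K -> k \notin K ->
    intensity u l j > intensity u k j.
Proof.
move=> _ m2_lt_m1 graphH cardK cardK' [_ lam1_max] [eig unit] l k lK kK.
have graphH' := first_kind_ideal_center_graph_sym graphH.
have n2_lt_n1 : (#|K' :\ j| < #|K :\ j|)%N.
  move: m2_lt_m1; rewrite -cardK -cardK' (cardsD1 j K) (cardsD1 j K').
  by rewrite (center_in_K graphH) (center_in_K graphH') ltn_add2l.
have n12 : #|K' :\ j|%:R + 1 <= #|K :\ j|%:R :> R by rewrite natr1 ler_nat.
have [z z_gt /lam1_max z_le] := exists_eigenvalue_gt graphH R n2_lt_n1.
have lam1_gt : #|K :\ j|%:R - 1 < lam1 := lt_le_trans z_gt z_le.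
have uE := eigenvector_blockv graphH n2_lt_n1 lam1_gt eig.
set c := u 0 j in uE.
have c_neq0 : c != 0.
  apply/eqP => c0; move: unit; rewrite big1 => [/eqP|i _]; first by rewrite eq_sym oner_eq0.
  by rewrite uE c0 !mul0r mxE !if_same; ring.
have cc_gt0 : 0 < c * c by rewrite lt0r mulf_neq0 //= -expr2 sqr_ge0.
have kK'j : k \in K' :\ j by rewrite -(notin_K graphH).
rewrite /intensity uE blockv_center (blockv_K' graphH _ _ _ kK'j) mulrAC.
have [->|lj] := eqVneq l j.
  by rewrite blockv_center ltr_pdivrMr ?ltr_pMr //; lra.
have lKj : l \in K :\ j by rewrite !inE lj.
by rewrite (blockv_K _ _ _ lKj) [X in _ < X]mulrAC ltr_pM2l // ltf_pV2 ?posrE; lra.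
Qed.
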